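(* Let $\mathcal{A}=\langle Q,A,E,I,T\rangle$ be a finite automaton over the free monoid $A^*$ and let $\omega$ and $\omega'$ be two total orders on $Q$. Then $$\mathbf{N}\wedge\mathbf{S}\wedge\mathbf{P}\ \vdash\ \mathsf{M}_\omega(\mathcal{A})\equiv\mathsf{M}_{\omega'}(\mathcal{A}),$$ that is, the two expressions produced by the McNaughton–Yamada algorithm for the orders $\omega$ and $\omega'$ can be proved equal using the natural identities $\mathbf{N}$ together with the aperiodic identities $\mathbf{S}$ and $\mathbf{P}$.
   Context: Rational expressions over $A^*$ are the well-formed formulas built from the constants $\mathsf{0}$ and $\mathsf{1}$ and the letters of $A$ by the binary operators $+$ and $\cdot$ and the unary operator ${}^*$. All expressions are taken reduced modulo the trivial identities $\mathsf{E}+\mathsf{0}\equiv\mathsf{E}$, $\mathsf{0}+\mathsf{E}\equiv\mathsf{E}$, $\mathsf{E}\cdot\mathsf{0}\equiv\mathsf{0}$, $\mathsf{0}\cdot\mathsf{E}\equiv\mathsf{0}$, $\mathsf{E}\cdot\mathsf{1}\equiv\mathsf{E}$, $\mathsf{1}\cdot\mathsf{E}\equiv\mathsf{E}$, $\mathsf{0}^*\equiv\mathsf{1}$, and all computations below are performed modulo them. The natural identities $\mathbf{N}$ are associativity of $+$ and of $\cdot$, distributivity of $\cdot$ over $+$ on both sides, and commutativity $\mathsf{E}+\mathsf{F}\equiv\mathsf{F}+\mathsf{E}$. The aperiodic identities are: - $\mathbf{S}$: $(\mathsf{E}+\mathsf{F})^*\equiv\mathsf{E}^*\cdot(\mathsf{F}\cdot\mathsf{E}^*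 )^*$ and $(\mathsf{E}+\mathsf{F})^*\equiv(\mathsf{E}^*\cdot\mathsf{F})^*\cdot\mathsf{E}^*$; - $\mathbf{P}$: $(\mathsf{E}\cdot\mathsf{F})^*\equiv\mathsf{1}+\mathsf{E}\cdot(\mathsf{F}\cdot\mathsf{E})^*\cdot\mathsf{F}$. For a set $\mathcal{I}$ of identities, $\mathcal{I}\vdash\mathsf{X}\equiv\mathsf{Y}$ means that $\mathsf{X}$ and $\mathsf{Y}$ are related by the smallest congruence on expressions (for $+$, $\cdot$ and ${}^*$) that contains all instances of the identities in $\mathcal{I}$, working modulo the trivial identities. McNaughton–Yamada algorithm for the order $\omega$. Identify $Q$ with $\{1,\dots,n\}$ via $\omega$. For $p,q\in Q$, let $\mathsf{E}_{p,q}$ be the sum, written in some fixed order and bracketing, of the letters labelling the transitions from $p$ to $q$; it is $\mathsf{0}$ if there is none. Define: - $\mathsf{M}^{(0)}_{p,q}=\mathsf{E}_{p,q}$; - for $1\le k\le n$, $\mathsf{M}^{(k)}_{p,q}=\mathsf{M}^{(k-1)}_{p,q}+\mathsf{M}^{(k-1)}_{p,k}\cdot(\mathsf{M}^{(k-1)}_{k,k})^*\cdot\mathsf{M}^{(k-1)}_{k,q}$; - $\mathsf{M}_{p,q}=\mathsf{M}^{(n)}_{p,q}$ if $p\neq q$, and $\mathsf{M}_{p,p}=\mathsf{M}^{(n)}_{p,p}+\mathsf{1}$. Then $\mathsf{M}_\omega(\mathcal{A})=\sum_{p\in I,\,q\in T}\mathsf{M}_{p,q}$, the sum being written in some fixed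 order and bracketing. It denotes the language accepted by $\mathcal{A}$. *)

From mathcomp Require Import all_boot.
Set Implicit Arguments. Unset Strict Implicit. Unset Printing Implicit Defensive.

Inductive rexp (A : Type) : Type :=
| Zero | One | Atom of A
| Plus of rexp A & rexp A
| Dot of rexp A & rexp A
| Star of rexp A.
Arguments Zero {A}. Arguments One {A}.

Section Exprs.
Variable A : Type.

(* Smart constructors: computations modulo the trivial identities. *)
Definition splus (e f : rexp A) : rexp A :=
  match e, f with
  | Zero, _ => f
  | _, Zero => e
  | _, _ => Plus e f
  end.
Definition sdot (e f : rexp A) : rexp A :=
  match e, f with
  | Zero, _ => Zero
  | _, Zero => Zero
  | One, _ => f
  | _, One => e
  | _, _ => Dot e f
  end.
Definition sstar (e : rexp A) : rexp A :=
  match e with Zero => One | _ => Star e end.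

(* N /\ S /\ P |- X == Y : smallest congruence containing all instances of
   N, S, P, taken modulo the trivial identities (which are therefore
   included as generators). *)
Inductive NSP_eq : rexp A -> rexp A -> Prop :=
| ax_refl e : NSP_eq e e
| ax_sym e f : NSP_eq e f -> NSP_eq f e
| ax_trans e f g : NSP_eq e f -> NSP_eq f g -> NSP_eq e g
| ax_plus e e' f f' : NSP_eq e e' -> NSP_eq f f' -> NSP_eq (Plus e f) (Plus e' f')
| ax_dot e e' f f' : NSP_eq e e' -> NSP_eq f f' -> NSP_eq (Dot e f) (Dot e' f')
| ax_star e e' : NSP_eq e e' -> NSP_eq (Star e) (Star e')
| tr_plus0r e : NSP_eq (Plus e Zero) e
| tr_plus0l e : NSP_eq (Plus Zero e) e
| tr_dot0r e : NSP_eq (Dot e Zero) Zero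
| tr_dot0l e : NSP_eq (Dot Zero e) Zero
| tr_dot1r e : NSP_eq (Dot e One) e
| tr_dot1l e : NSP_eq (Dot One e) e
| tr_star0 : NSP_eq (Star Zero) One
| N_plusA e f g : NSP_eq (Plus e (Plus f g)) (Plus (Plus e f) g)
| N_dotA e f g : NSP_eq (Dot e (Dot f g)) (Dot (Dot e f) g)
| N_distl e f g : NSP_eq (Dot e (Plus f g)) (Plus (Dot e f) (Dot e g))
| N_distr e f g : NSP_eq (Dot (Plus e f) g) (Plus (Dot e g) (Dot f g))
| N_plusC e f : NSP_eq (Plus e f) (Plus f e)
| S_l e f : NSP_eq (Star (Plus e f)) (Dot (Star e) (Star (Dot f (Star e))))
| S_r e f : NSP_eq (Star (Plus e f)) (Dot (Star (Dot (Star e) f)) (Star e))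
| P_ax e f : NSP_eq (Star (Dot e f)) (Plus One (Dot (Dot e (Star (Dot f e))) f)).

Definition ssum (l : seq (rexp A)) : rexp A := foldr splus Zero l.

End Exprs.

Section MY.
Variables (Q A : finType).

Record automaton := Automaton {
  trans : Q -> A -> Q -> bool;
  initial : {set Q};
  final : {set Q} }.

Variable aut : automaton.

Definition Elab (p q : Q) : rexp A :=
  ssum [seq Atom a | a <- enum A & trans aut p a q].

Definition MY_step (M : Q -> Q -> rexp A) (k : Q) : Q -> Q -> rexp A :=
  fun p q => splus (M p q) (sdot (sdot (M p k) (sstar (M k k))) (M k q)).

(* A total order r on Q; the identification Q = {1..n} is the
   r-sorted enumeration of Q. *)
Definition total_order (r : rel Q) : Prop :=
  [/\ reflexive r, antisymmetric r, transitive r & total r].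

Definition order_enum (r : rel Q) : seq Q := sort r (enum Q).

Definition Mn (r : rel Q) : Q -> Q -> rexp A :=
  foldl MY_step Elab (order_enum r).

Definition Mpq (r : rel Q) (p q : Q) : rexp A :=
  if p == q then splus (Mn r p p) One else Mn r p q.

Definition MY (r : rel Q) : rexp A :=
  ssum [seq Mpq r pq.1 pq.2 | pq <- [seq (p, q) | p <- enum (initial aut), q <- enum (final aut)]].

End MY.

From mathcomp Require Import all_boot.
From Stdlib Require Import Setoid Morphisms.
Set Implicit Arguments. Unset Strict Implicit. Unset Printing Implicit Defensive.

(** Eliminating two
    states k and l in either order turns M(p,q) into M(p,q) + P X Q, where P and Q are
    the rows and columns of M through {k, l} and X is the star of the 2x2 block
    [[a, b], [c, d]] of M on {k, l}: first pivoting on a gives the entries of X in terms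
    of (d + c a^* b)^*, first pivoting on d in terms of (a + b d^* c)^*, and the identities
    S and P (star of a sum, sliding a star along a product) show the two formulas agree.
    So two consecutive elimination steps commute up to N, S, P, and the McNaughton-Yamada
    matrix only depends on the set of states eliminated, not on their order. *)

Notation "x =~ y" := (NSP_eq x y) (at level 70).

Add Parametric Relation (A : Type) : (rexp A) (@NSP_eq A)
  reflexivity proved by (@ax_refl A) symmetry proved by (@ax_sym A)
  transitivity proved by (@ax_trans A) as NSP_rel.
Add Parametric Morphism (A : Type) : (@Plus A) with signature
  (@NSP_eq A) ==> (@NSP_eq A) ==> (@NSP_eq A) as Plus_mor.
Proof. by move=> *; apply: ax_plus. Qed.
Add Parametric Morphism (A : Type) : (@Dot A) with signature
  (@NSP_eq A) ==> (@NSP_eq A) ==> (@NSP_eq A) as Dot_mor.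
Proof. by move=> *; apply: ax_dot. Qed.
Add Parametric Morphism (A : Type) : (@Star A) with signature
  (@NSP_eq A) ==> (@NSP_eq A) as Star_mor.
Proof. by move=> *; apply: ax_star. Qed.

Section FoldlPerm.
Context {T : Type} {X : eqType} {R : relation T} `{Equivalence T R}.
Variable f : T -> X -> T.
Hypothesis f_congr : forall a, Proper (R ==> R) (f^~ a).
Hypothesis f_comm : forall x a b, R (f (f x a) b) (f (f x b) a).

Lemma foldl_congr x y s : R x y -> R (foldl f x s) (foldl f y s).
Proof. by elim: s x y => [|a s IHs] x y //= Rxy; apply/IHs/f_congr. Qed.

Lemma foldl_cat_cons x s1 a s2 :
  R (foldl f x (s1 ++ a :: s2)) (foldl f (f x a) (s1 ++ s2)).
Proof.
elim: s1 x => [|b s1 IHs1] x /=; first reflexivity.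
by rewrite IHs1; apply: foldl_congr.
Qed.

Lemma foldl_perm x s t : perm_eq s t -> R (foldl f x s) (foldl f x t).
Proof.
elim: s t x => [|a s IHs] t x eq_st.
  by move: eq_st; rewrite perm_sym => /perm_nilP ->; reflexivity.
have t_a : a \in t by rewrite -(perm_mem eq_st) mem_head.
move: eq_st; case/splitPr: t_a => t1 t2 eq_st.
have eq_s : perm_eq s (t1 ++ t2).
  by rewrite -(perm_cons a) (perm_trans eq_st) // (perm_catCA t1 [:: a] t2).
by rewrite foldl_cat_cons /= (IHs _ _ eq_s); reflexivity.
Qed.

End FoldlPerm.

(** Normal forms modulo N are sums of words over the atoms: N makes [+] commutative
    but not [·], so a sum of words is determined up to a permutation of its terms. *)
Section SemiringNormalForm.
Variable A : Type.

Inductive sexp := SVar of nat | SZero | SOne | SPlus of sexp & sexp | SDot of sexp & sexp.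

Variable env : nat -> rexp A.

Fixpoint seval e := match e with
  | SVar n => env n | SZero => Zero | SOne => One
  | SPlus x y => Plus (seval x) (seval y) | SDot x y => Dot (seval x) (seval y) end.

Fixpoint words_mul (s1 s2 : seq (seq nat)) := match s1 with
  | [::] => [::] | w :: s => map (cat w) s2 ++ words_mul s s2 end.

Fixpoint snorm e : seq (seq nat) := match e with
  | SVar n => [:: [:: n]] | SZero => [::] | SOne => [:: [::]]
  | SPlus x y => snorm x ++ snorm y | SDot x y => words_mul (snorm x) (snorm y) end.

Definition word_eval (w : seq nat) := foldr (fun n r => Dot (env n) r) One w.
Definition words_eval (s : seq (seq nat)) := foldr (fun w r => Plus (word_eval w) r) Zero s.

Lemma plusCA (x y z : rexp A) : Plus x (Plus y z) =~ Plus y (Plus x z).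
Proof. by rewrite N_plusA (N_plusC x y) -N_plusA; reflexivity. Qed.

Lemma word_eval_cat w1 w2 : word_eval (w1 ++ w2) =~ Dot (word_eval w1) (word_eval w2).
Proof.
elim: w1 => [|n w1 IHw1] /=; first by rewrite tr_dot1l; reflexivity.
by rewrite IHw1 N_dotA; reflexivity.
Qed.

Lemma words_eval_cat s1 s2 : words_eval (s1 ++ s2) =~ Plus (words_eval s1) (words_eval s2).
Proof.
elim: s1 => [|w s1 IHs1] /=; first by rewrite tr_plus0l; reflexivity.
by rewrite IHs1 N_plusA; reflexivity.
Qed.

Lemma words_eval_map_cat w s :
  words_eval (map (cat w) s) =~ Dot (word_eval w) (words_eval s).
Proof.
elim: s => [|w' s IHs] /=; first by rewrite tr_dot0r; reflexivity.
by rewrite IHs word_eval_cat N_distl; reflexivity.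
Qed.

Lemma words_eval_mul s1 s2 :
  words_eval (words_mul s1 s2) =~ Dot (words_eval s1) (words_eval s2).
Proof.
elim: s1 => [|w s1 IHs1] /=; first by rewrite tr_dot0l; reflexivity.
by rewrite words_eval_cat IHs1 words_eval_map_cat N_distr; reflexivity.
Qed.

Lemma seval_snorm e : seval e =~ words_eval (snorm e).
Proof.
elim: e => [n||| x IHx y IHy | x IHx y IHy] /=.
- by rewrite tr_plus0r tr_dot1r; reflexivity.
- reflexivity.
- by rewrite tr_plus0r; reflexivity.
- by rewrite words_eval_cat IHx IHy; reflexivity.
- by rewrite words_eval_mul IHx IHy; reflexivity.
Qed.

Lemma words_eval_perm s t : perm_eq s t -> words_eval s =~ words_eval t.
Proof.
move=> eq_st; rewrite /words_eval -!foldl_rev.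
apply: (@foldl_perm _ _ (@NSP_eq A)) => [w x y ->|x w w'|]; first reflexivity.
- exact: plusCA.
- by rewrite perm_rev perm_sym perm_rev perm_sym.
Qed.

Lemma snorm_sound e1 e2 : perm_eq (snorm e1) (snorm e2) -> seval e1 =~ seval e2.
Proof. by move=> eq12; rewrite !seval_snorm (words_eval_perm eq12); reflexivity. Qed.

End SemiringNormalForm.

Ltac mem_list x l := lazymatch l with
  | x :: _ => constr:(true)
  | _ :: ?l' => mem_list x l'
  | _ => constr:(false) end.
Ltac collect_atoms t l := lazymatch t with
  | Plus ?x ?y => let l1 := collect_atoms x l in collect_atoms y l1
  | Dot ?x ?y => let l1 := collect_atoms x l in collect_atoms y l1
  | Zero => l | One => l
  | _ => let b := mem_list t l in
         lazymatch b with true => l | false => constr:(t :: l) end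
  end.
Ltac index_of x l := lazymatch l with
  | x :: _ => constr:(0)
  | _ :: ?l' => let n := index_of x l' in constr:(S n) end.
Ltac reify t l := lazymatch t with
  | Plus ?x ?y => let a := reify x l in let b := reify y l in constr:(SPlus a b)
  | Dot ?x ?y => let a := reify x l in let b := reify y l in constr:(SDot a b)
  | Zero => constr:(SZero) | One => constr:(SOne)
  | _ => let n := index_of t l in constr:(SVar n) end.

(** Decides equalities that follow from N and the trivial identities alone,
    treating every star and letter as an atom. *)
Ltac N_solve := lazymatch goal with |- @NSP_eq ?A ?x ?y =>
  let l0 := collect_atoms x (@nil (rexp A)) in
  let l := collect_atoms y l0 in
  let ex := reify x l in let ey := reify y l in
  change (@NSP_eq A (seval (fun n => nth Zero l n) ex) (seval (fun n => nth Zero l n) ey));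
  apply: snorm_sound; vm_compute; reflexivity end.

Section StarIdentities.
Variable A : Type.
Implicit Types a b c d e f : rexp A.

Lemma star_unfold_r e : Star e =~ Plus One (Dot (Star e) e).
Proof. by have := P_ax One e; rewrite tr_dot1l tr_dot1r tr_dot1l. Qed.

Lemma star_slide e f : Dot (Star (Dot e f)) e =~ Dot e (Star (Dot f e)).
Proof.
rewrite {1}(P_ax e f).
transitivity (Dot e (Plus One (Dot (Star (Dot f e)) (Dot f e)))); first by N_solve.
by rewrite -star_unfold_r; reflexivity.
Qed.

Lemma star_dot_reassoc_l a b c d :
  Star (Dot (Dot (Dot b (Star d)) c) (Star a)) =~
  Star (Dot b (Dot (Dot (Star d) c) (Star a))).
Proof. by apply: ax_star; N_solve. Qed.

Lemma star_dot_reassoc_r a b c d :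
  Star (Dot (Star d) (Dot (Dot c (Star a)) b)) =~
  Star (Dot (Dot (Dot (Star d) c) (Star a)) b).
Proof. by apply: ax_star; N_solve. Qed.

(** The star of the block matrix [[a, b], [c, d]] computed by first pivoting on [d]
    (left-hand sides, through [(a + b d^* c)^*]) and on [a] (right-hand sides, through
    [(d + c a^* b)^*]): its [a]-diagonal entry and its two off-diagonal entries. *)
Lemma star_schur a b c d :
  Star (Plus a (Dot (Dot b (Star d)) c)) =~
  Plus (Star a) (Dot (Dot (Dot (Dot (Star a) b)
     (Star (Plus d (Dot (Dot c (Star a)) b)))) c) (Star a)).
Proof.
rewrite S_l star_dot_reassoc_l P_ax -star_dot_reassoc_r (S_r d).
N_solve.
Qed.

Lemma star_schur_dot_l a b c d :
  Dot (Dot (Star d) c) (Star (Plus a (Dot (Dot b (Star d)) c))) =~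
  Dot (Dot (Star (Plus d (Dot (Dot c (Star a)) b))) c) (Star a).
Proof.
rewrite (S_r d) (S_l a) star_dot_reassoc_r star_dot_reassoc_l.
symmetry; transitivity (Dot (Star (Dot (Dot (Dot (Star d) c) (Star a)) b))
                            (Dot (Dot (Star d) c) (Star a))); first by N_solve.
by rewrite star_slide; N_solve.
Qed.

Lemma star_schur_dot_r a b c d :
  Dot (Dot (Star (Plus a (Dot (Dot b (Star d)) c))) b) (Star d) =~
  Dot (Dot (Star a) b) (Star (Plus d (Dot (Dot c (Star a)) b))).
Proof.
rewrite (S_r d) (S_l a) star_dot_reassoc_r star_dot_reassoc_l.
transitivity (Dot (Star a) (Dot (Dot (Star (Dot b (Dot (Dot (Star d) c) (Star a)))) b)
                                (Star d))); first by N_solve.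
by rewrite star_slide; N_solve.
Qed.

(** [R + (P1 P2) [[U, Z], [W, V]] (Q1 Q2)^T]. *)
Definition bilin R P1 P2 Q1 Q2 U Z W V : rexp A :=
  Plus R (Plus (Dot (Dot P1 U) Q1) (Plus (Dot (Dot P1 Z) Q2)
     (Plus (Dot (Dot P2 W) Q1) (Dot (Dot P2 V) Q2)))).

Lemma bilin_swap R P1 P2 Q1 Q2 U Z W V :
  bilin R P1 P2 Q1 Q2 U Z W V =~ bilin R P2 P1 Q2 Q1 V W Z U.
Proof. by rewrite /bilin; N_solve. Qed.

Lemma two_pivots_bilin R P1 P2 Q1 Q2 a b c d :
  Plus (Plus R (Dot (Dot P1 (Star a)) Q1))
    (Dot (Dot (Plus P2 (Dot (Dot P1 (Star a)) b)) (Star (Plus d (Dot (Dot c (Star a)) b))))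
         (Plus Q2 (Dot (Dot c (Star a)) Q1)))
  =~ bilin R P1 P2 Q1 Q2
       (Plus (Star a) (Dot (Dot (Dot (Dot (Star a) b)
          (Star (Plus d (Dot (Dot c (Star a)) b)))) c) (Star a)))
       (Dot (Dot (Star a) b) (Star (Plus d (Dot (Dot c (Star a)) b))))
       (Dot (Dot (Star (Plus d (Dot (Dot c (Star a)) b))) c) (Star a))
       (Star (Plus d (Dot (Dot c (Star a)) b))).
Proof. by rewrite /bilin; N_solve. Qed.

(** Entry [(p, q)] after eliminating [k] then [l] (left) and [l] then [k] (right), where
    [R, P1, P2, Q1, Q2, a, b, c, d] are [M p q, M p k, M p l, M k q, M l q, M k k, M k l,
    M l k, M l l]. *)
Lemma two_pivots_comm R P1 P2 Q1 Q2 a b c d :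
  Plus (Plus R (Dot (Dot P1 (Star a)) Q1))
    (Dot (Dot (Plus P2 (Dot (Dot P1 (Star a)) b)) (Star (Plus d (Dot (Dot c (Star a)) b))))
         (Plus Q2 (Dot (Dot c (Star a)) Q1)))
  =~ Plus (Plus R (Dot (Dot P2 (Star d)) Q2))
    (Dot (Dot (Plus P1 (Dot (Dot P2 (Star d)) c)) (Star (Plus a (Dot (Dot b (Star d)) c))))
         (Plus Q1 (Dot (Dot b (Star d)) Q2))).
Proof.
rewrite !two_pivots_bilin bilin_swap /bilin.
by rewrite -star_schur -(star_schur d) star_schur_dot_l star_schur_dot_r; reflexivity.
Qed.

End StarIdentities.

Section Elimination.
Variables (Q : eqType) (A : Type).

Definition meq : relation (Q -> Q -> rexp A) :=
  pointwise_relation Q (pointwise_relation Q (@NSP_eq A)).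

Definition elim_step (M : Q -> Q -> rexp A) (k : Q) : Q -> Q -> rexp A :=
  fun p q => Plus (M p q) (Dot (Dot (M p k) (Star (M k k))) (M k q)).

Lemma elim_step_congr k : Proper (meq ==> meq) (elim_step^~ k).
Proof. by move=> M N eqMN p q; rewrite /elim_step !eqMN; reflexivity. Qed.

Lemma elim_step_comm M k l :
  meq (elim_step (elim_step M k) l) (elim_step (elim_step M l) k).
Proof. by move=> p q; apply: two_pivots_comm. Qed.

Lemma elim_perm M s t : perm_eq s t -> meq (foldl elim_step M s) (foldl elim_step M t).
Proof. exact: (@foldl_perm _ _ meq _ _ elim_step_congr elim_step_comm). Qed.

End Elimination.

Lemma splus_NSP (A : Type) (e f : rexp A) : splus e f =~ Plus e f.
Proof.
case: e => [||x|x y|x y|x]; case: f => [||u|u v|u v|u] /=;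
  try reflexivity; symmetry; first [apply: tr_plus0l | apply: tr_plus0r].
Qed.

Lemma sdot_NSP (A : Type) (e f : rexp A) : sdot e f =~ Dot e f.
Proof.
case: e => [||x|x y|x y|x]; case: f => [||u|u v|u v|u] /=;
  try reflexivity; symmetry;
  first [apply: tr_dot0l | apply: tr_dot0r | apply: tr_dot1l | apply: tr_dot1r].
Qed.

Lemma sstar_NSP (A : Type) (e : rexp A) : sstar e =~ Star e.
Proof. by case: e => /=; try reflexivity; symmetry; apply: tr_star0. Qed.

Lemma MY_step_elim_step (Q A : finType) (M N : Q -> Q -> rexp A) s :
  meq M N -> meq (foldl (@MY_step Q A) M s) (foldl (@elim_step Q A) N s).
Proof.
elim: s M N => [|k s IHs] M N eqMN //=; apply: IHs => p q.
by rewrite /MY_step /elim_step splus_NSP !sdot_NSP sstar_NSP !eqMN; reflexivity.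
Qed.

Lemma Mn_order_invariant (Q A : finType) (aut : automaton Q A) (r r' : rel Q) :
  meq (Mn aut r) (Mn aut r').
Proof.
rewrite /Mn => p q; rewrite !(MY_step_elim_step _ (reflexivity (Elab aut))).
by apply: elim_perm; rewrite /order_enum perm_sort perm_sym perm_sort.
Qed.

Lemma ssum_map_congr (A T : Type) (f g : T -> rexp A) (s : seq T) :
  (forall x, f x =~ g x) -> ssum (map f s) =~ ssum (map g s).
Proof.
move=> eq_fg; elim: s => [|x s IHs] /=; first reflexivity.
by rewrite !splus_NSP IHs eq_fg; reflexivity.
Qed.

Theorem corollary3p10 (Q A : finType) (aut : automaton Q A) (w w' : rel Q) :
  total_order w -> total_order w' ->
  NSP_eq (MY aut w) (MY aut w').
Proof.
move=> _ _; have eqM := Mn_order_invariant aut w w'.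
apply: ssum_map_congr => -[p q] /=; rewrite /Mpq.
by case: eqP => _; rewrite ?splus_NSP eqM; reflexivity.
Qed.
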